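(* For $\mathbf v\in\mathbb{R}^\infty$, let $g_{-\mathbf v}(x)$ be the generating function of $\mathbb{F}^{\rm F}\mathbf v$ and $g_{\mathbf v}(x)$ the generating function of $\mathbb{L}^{\rm F}\mathbf v$, where $\mathbb{F}^{\rm F}=\left(\frac{x}{1-x},\frac{x^2}{1-x}\right)$ and $\mathbb{L}^{\rm F}=\left(\frac{2-x}{1-x},\frac{x^2}{1-x}\right)$. Let $C(x)=\frac{1-\sqrt{1-4x}}{2x}$ and $M(x)=\frac{1-x-\sqrt{(1-x)^2-4x^2}}{2x^2}$. Then, as formal power series: (a) $g_{\mathbf v}(xC(x))=\left(C(x)-\frac{2}{x}\right)g_{-\mathbf v}(1-C(x))$; (b) $g_{\mathbf v}(1-C(x))=\left(2xC(x)^2+xC(x)-4C(x)+\frac{2-x}{x}\right)g_{-\mathbf v}(xC(x))$; (c) $g_{\mathbf v}(xC(x))=\left(\frac{x-2}{x}+\frac{x}{1-x}M\!\left(\frac{x}{1-x}\right)\right)g_{-\mathbf v}\!\left(-\frac{x}{1-x}M\!\left(\frac{x}{1-x}\right)\right)$; (d) $g_{\mathbf v}\!\left(-\frac{x}{1-x}M\!\left(\frac{x}{1-x}\right)\right)=\left((3x-4)C(x)+\frac{2x^2C(x)}{1-x}M\!\left(\frac{x}{1-x}\right)+\frac{2-x}{x}\right)g_{-\mathbf v}(xC(x))$.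
   Context: $\mathbb{R}^\infty$ is the space of real column vectors $[v_0,v_1,\ldots]^T$, identified with generating functions $\sum_n v_nx^n$. For formal power series $g(x)$ and $f(x)$ with $f(0)=0$, $(g(x),f(x))$ denotes the infinite lower triangular matrix whose $j$-th column has generating function $g(x)f(x)^j$; it maps a vector with generating function $U(x)$ to the vector with generating function $g(x)U(f(x))$. Note $g_{-\mathbf v}$ has zero constant term, so the products with the factor $1/x$ above are formal power series. *)

From HB Require Import structures.
From mathcomp Require Import all_boot all_order all_algebra.
From mathcomp Require Import reals.
Set Implicit Arguments. Unset Strict Implicit. Unset Printing Implicit Defensive.
Import Order.TTheory GRing.Theory Num.Theory.
Local Open Scope ring_scope.

Section FPS.
Variable R : rcfType.

Definition fps := nat -> R.

Definition fcst (c : R) : fps := fun n => if n == 0%N then c else 0.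
Definition fX : fps := fun n => if n == 1%N then 1 else 0.
Definition fadd (f g : fps) : fps := fun n => f n + g n.
Definition fscale (c : R) (f : fps) : fps := fun n => c * f n.
Definition fsub (f g : fps) : fps := fun n => f n - g n.
Definition fopp (f : fps) : fps := fun n => - f n.
Definition fmul (f g : fps) : fps :=
  fun n => \sum_(i < n.+1) f i * g (n - i)%N.
Definition fpow (f : fps) (k : nat) : fps := iter k (fmul f) (fcst 1).
(* composition g(h(x)); meaningful when h 0 = 0 *)
Definition fcomp (g h : fps) : fps :=
  fun n => \sum_(k < n.+1) g k * fpow h k n.
(* division by x: (f(x) - f(0)) / x, i.e. f / x when f 0 = 0 *)
Definition divX (f : fps) : fps := fun n => f n.+1.

(* multiplicative inverse 1/f (for f 0 <> 0): coefficients b_0..b_n *)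
Fixpoint inv_seq (f : fps) (n : nat) : seq R :=
  match n with
  | 0 => [:: (f 0%N)^-1]
  | m.+1 => let s := inv_seq f m in
      rcons s (- (f 0%N)^-1 * \sum_(i < m.+1) f (m.+1 - i)%N * nth 0 s i)
  end.
Definition finv (f : fps) : fps := fun n => nth 0 (inv_seq f n) n.
Definition fdiv (f g : fps) : fps := fmul f (finv g).

(* principal square root (constant term Num.sqrt (f 0)), for f 0 > 0 *)
Fixpoint sqrt_seq (f : fps) (n : nat) : seq R :=
  match n with
  | 0 => [:: Num.sqrt (f 0%N)]
  | m.+1 => let s := sqrt_seq f m in
      rcons s ((f m.+1 - \sum_(1 <= k < m.+1) nth 0 s k * nth 0 s (m.+1 - k)%N)
               / (2 * Num.sqrt (f 0%N)))
  end.
Definition fsqrt (f : fps) : fps := fun n => nth 0 (sqrt_seq f n) n.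

(* the Riordan array (g, f) acting on V : V(x) |-> g(x) V(f(x)) *)
Definition riordan_apply (g f V : fps) : fps := fmul g (fcomp V f).

Definition one_minus_x : fps := fsub (fcst 1) fX.

Definition FF_g : fps := fdiv fX one_minus_x.
Definition FF_f : fps := fdiv (fmul fX fX) one_minus_x.
Definition LF_g : fps := fdiv (fsub (fcst 2) fX) one_minus_x.
Definition LF_f : fps := fdiv (fmul fX fX) one_minus_x.

(* g_{-v} = gf of F^F v ;  g_v = gf of L^F v *)
Definition g_minus (v : fps) : fps := riordan_apply FF_g FF_f v.
Definition g_plus (v : fps) : fps := riordan_apply LF_g LF_f v.

(* C(x) = (1 - sqrt(1-4x)) / (2x) *)
Definition Cat : fps :=
  divX (fscale (1/2) (fsub (fcst 1) (fsqrt (fsub (fcst 1) (fscale 4 fX))))).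
(* M(x) = (1 - x - sqrt((1-x)^2 - 4x^2)) / (2x^2) *)
Definition Motz : fps :=
  divX (divX (fscale (1/2)
    (fsub one_minus_x
       (fsqrt (fsub (fmul one_minus_x one_minus_x)
                    (fscale 4 (fmul fX fX))))))).

(* (A + B/x) * G, where B*G has zero constant term (so the result is an fps) *)
Definition laurent_mul (A B G : fps) : fps := fadd (fmul A G) (divX (fmul B G)).

End FPS.

From Pilot Require Import Defs.
From mathcomp Require Import all_boot all_order all_algebra.
From mathcomp Require Import reals.
From Stdlib Require Import FunctionalExtensionality Ring.
Set Implicit Arguments. Unset Strict Implicit. Unset Printing Implicit Defensive.
Import Order.TTheory GRing.Theory Num.Theory.
Local Open Scope ring_scope.

(* Both Riordan arrays have second component f = x^2/(1-x). The Catalan equation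
   xC^2 = C - 1 gives 1/(1 - xC) = C and 1/C = 1 - xC, hence f(xC) = f(1 - C) = x^2C^3:
   at both substitutions g_v and g_{-v} carry the common factor v(x^2C^3), and each
   identity reduces to an identity between polynomials in x and C modulo the Catalan
   equation. Parts (c) and (d) are (a) and (b) in disguise, because
   x M(x/(1-x)) / (1-x) = C - 1: both sides are the root with zero constant term of
   x y^2 - (1 - 2x) y + x = 0.
   Formal power series are given a commutative ring structure for the ring tactic;
   its axioms, like the rules for composition, are checked on polynomial truncations. *)

Section FormalPowerSeries.
Variable R : rcfType.
Local Notation fps := (fps R).
Local Notation fx := (fX R).
(* Plain [finv] would be fingraph's inverse of an injective function. *)
Local Notation finv := (@Defs.finv R).
Local Notation omx := (one_minus_x R).
Local Notation io := (finv omx).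
Local Notation C := (Cat R).
Local Notation M := (Motz R).
Local Notation xC := (fmul fx C).
Local Notation omC := (fsub (fcst 1) C).
Local Notation t := (fdiv fx omx).
Local Notation w := (fmul t (fcomp M t)).
Local Notation x2C3 := (fmul (fmul xC xC) C).

(** * The ring of formal power series *)

Lemma fps_ext (f g : fps) : (forall n, f n = g n) -> f = g.
Proof. exact: functional_extensionality. Qed.

Definition agree (N : nat) (p : {poly R}) (f : fps) :=
  forall i, (i < N)%N -> p`_i = f i.

Definition fps_trunc (N : nat) (f : fps) : {poly R} := \poly_(i < N) f i.

Lemma agree_trunc N f : agree N (fps_trunc N f) f.
Proof. by move=> i ltiN; rewrite coef_poly ltiN. Qed.

Lemma agree_eq (p : nat -> {poly R}) (f g : fps) :
  (forall n, agree n.+1 (p n) f) -> (forall n, agree n.+1 (p n) g) -> f = g.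
Proof. by move=> pf pg; apply: fps_ext => n; rewrite -(pf n n) // (pg n n). Qed.

Lemma agree_cst N c : agree N c%:P (fcst c).
Proof. by move=> i _; rewrite coefC. Qed.

Lemma agree_X N : agree N 'X fx.
Proof. by move=> i _; rewrite coefX /fX; case: eqP. Qed.

Lemma agree_add N p q f g : agree N p f -> agree N q g -> agree N (p + q) (fadd f g).
Proof. by move=> pf qg i ltiN; rewrite coefD pf // qg. Qed.

Lemma agree_sub N p q f g : agree N p f -> agree N q g -> agree N (p - q) (fsub f g).
Proof. by move=> pf qg i ltiN; rewrite coefB pf // qg. Qed.

Lemma agree_mul N p q f g : agree N p f -> agree N q g -> agree N (p * q) (fmul f g).
Proof.
move=> pf qg i ltiN; rewrite coefM; apply: eq_bigr => j _.
rewrite pf ?qg //; apply: leq_ltn_trans ltiN; first exact: leq_subr.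
by rewrite -ltnS.
Qed.

Lemma agree_exp N q h k : agree N q h -> agree N (q ^+ k) (fpow h k).
Proof.
move=> qh; elim: k => [|k IHk]; first exact: agree_cst.
by rewrite exprS /fpow iterS; apply: agree_mul.
Qed.

Lemma coef_exp_lt (q : {poly R}) k n : q`_0 = 0 -> (n < k)%N -> (q ^+ k)`_n = 0.
Proof.
move=> q0; elim: k n => [|k IHk] n //= ltnk.
rewrite exprS coefM big1 // => -[[|j] ltjn] _ /=; first by rewrite q0 mul0r.
by rewrite IHk ?mulr0 // (leq_trans _ (ltnk : n <= k)%N) // subnSK ?leq_subr.
Qed.

Lemma agree_comp N (p q : {poly R}) (g h : fps) : q`_0 = 0 -> agree N p g -> agree N q h ->
  agree N (p \Po q) (fcomp g h).
Proof.
move=> q0 pg qh n ltnN; rewrite coef_comp_poly /fcomp.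
pose F i := p`_i * (q ^+ i)`_n; pose m := (size p + n.+1)%N.
have widen k : (k <= m)%N -> (forall i, (k <= i)%N -> F i = 0) ->
    \sum_(i < k) F i = \sum_(i < m) F i.
  move=> lekm F0; rewrite (big_ord_widen _ _ lekm) big_mkcond.
  by apply: eq_bigr => i _; case: ltnP => // /F0 ->.
rewrite widen ?leq_addr //; last by move=> i le_pi; rewrite /F nth_default ?mul0r.
rewrite -(widen n.+1) ?leq_addl //; last by move=> i ltni; rewrite /F coef_exp_lt ?mulr0.
apply: eq_bigr => i _; have ltiN : (i < N)%N := leq_trans (ltn_ord i) ltnN.
by rewrite /F pg // (agree_exp i qh ltnN).
Qed.

Local Notation trunc n f := (fps_trunc n.+1 f).

Lemma fmulC (f g : fps) : fmul f g = fmul g f.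
Proof.
apply: (@agree_eq (fun n => trunc n f * trunc n g)) => n.
  by apply: agree_mul; apply: agree_trunc.
by rewrite mulrC; apply: agree_mul; apply: agree_trunc.
Qed.

Lemma fmulA (f g h : fps) : fmul f (fmul g h) = fmul (fmul f g) h.
Proof.
apply: (@agree_eq (fun n => trunc n f * (trunc n g * trunc n h))) => n.
  by do 2?apply: agree_mul; apply: agree_trunc.
by rewrite mulrA; do 2?apply: agree_mul; apply: agree_trunc.
Qed.

Lemma fmul1 (f : fps) : fmul (fcst 1) f = f.
Proof.
apply: (@agree_eq (fun n => 1%:P * trunc n f)) => n.
  by apply: agree_mul; [apply: agree_cst | apply: agree_trunc].
by rewrite mul1r; apply: agree_trunc.
Qed.

Lemma fmulDl (f g h : fps) : fmul (fadd f g) h = fadd (fmul f h) (fmul g h).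
Proof.
apply: (@agree_eq (fun n => (trunc n f + trunc n g) * trunc n h)) => n.
  by apply: agree_mul; [apply: agree_add|]; apply: agree_trunc.
by rewrite mulrDl; apply: agree_add; apply: agree_mul; apply: agree_trunc.
Qed.

Lemma fps_ring_theory :
  ring_theory (fcst 0) (fcst 1) (@fadd R) (@fmul R) (@fsub R) (@fopp R) (@eq fps).
Proof.
split=> //.
- by move=> f; apply: fps_ext => n; rewrite /fadd /fcst; case: (n == 0%N); rewrite add0r.
- by move=> f g; apply: fps_ext => n; rewrite /fadd addrC.
- by move=> f g h; apply: fps_ext => n; rewrite /fadd addrA.
- exact: fmul1.
- exact: fmulC.
- exact: fmulA.
- exact: fmulDl.
- by move=> f; apply: fps_ext => n; rewrite /fadd /fopp /fcst subrr; case: (n == 0%N).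
Qed.

Add Ring fps_ring : fps_ring_theory.

Lemma fcst_nat n : fcst n%:R = iter n (fadd (fcst 1)) (fcst 0) :> fps.
Proof.
elim: n => [|n IHn] //; rewrite iterS -IHn.
by apply: fps_ext => k; rewrite /fadd /fcst mulrS; case: eqP; rewrite ?addr0.
Qed.

Lemma fcstN c : fcst (- c) = fopp (fcst c) :> fps.
Proof. by apply: fps_ext => n; rewrite /fopp /fcst; case: eqP; rewrite ?oppr0. Qed.

Lemma fscaleE c (f : fps) : fscale c f = fmul (fcst c) f.
Proof.
apply: (@agree_eq (fun n => c%:P * trunc n f)) => n.
  by move=> i ltin; rewrite coefCM coef_poly ltin.
by apply: agree_mul; [apply: agree_cst | apply: agree_trunc].
Qed.

Lemma fcstM a b : fcst (a * b) = fmul (fcst a) (fcst b) :> fps.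
Proof.
by rewrite -fscaleE; apply: fps_ext => n; rewrite /fscale /fcst; case: eqP; rewrite ?mulr0.
Qed.

Lemma fmul_half2 (f : fps) : fmul (fcst 2) (fscale (1/2) f) = f.
Proof. by rewrite fscaleE fmulA -fcstM mul1r mulfV ?fmul1 ?pnatr_eq0. Qed.

Lemma fmul_coef0 (f g : fps) : fmul f g 0%N = f 0%N * g 0%N.
Proof. by rewrite /fmul big_ord1. Qed.

Lemma fsub0_eq (f g : fps) : fsub f g = fcst 0 -> f = g.
Proof. by move=> fg0; transitivity (fadd (fsub f g) g); [ring | rewrite fg0; ring]. Qed.

Lemma fXmul_coefS (f : fps) n : fmul fx f n.+1 = f n.
Proof.
rewrite -(agree_mul (@agree_X n.+2) (@agree_trunc n.+2 f) (ltnSn n.+1)).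
by rewrite coefXM coef_poly ltnS ltnW.
Qed.

Lemma divX_fXmul (f : fps) : divX (fmul fx f) = f.
Proof. exact/fps_ext/fXmul_coefS. Qed.

Lemma fXmul_divX (f : fps) : f 0%N = 0 -> fmul fx (divX f) = f.
Proof.
by move=> f0; apply: fps_ext => -[|n]; rewrite ?fXmul_coefS // fmul_coef0 f0 mul0r.
Qed.

Lemma fXmulI (f g : fps) : fmul fx f = fmul fx g -> f = g.
Proof. by move=> fg; rewrite -(divX_fXmul f) fg divX_fXmul. Qed.

Lemma fcomp_coef0 (g h : fps) : fcomp g h 0%N = g 0%N.
Proof. by rewrite /fcomp big_ord1 /= /fcst mulr1. Qed.

Lemma agree_fcomp n (g h : fps) : h 0%N = 0 ->
  agree n.+1 (trunc n g \Po trunc n h) (fcomp g h).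
Proof.
by move=> h0; apply: agree_comp; rewrite ?coef_poly //; apply: agree_trunc.
Qed.

Lemma fcompB (f g h : fps) : h 0%N = 0 ->
  fcomp (fsub f g) h = fsub (fcomp f h) (fcomp g h).
Proof.
move=> h0; apply: (@agree_eq (fun n => (trunc n f - trunc n g) \Po trunc n h)) => n.
  by apply: agree_comp; rewrite ?coef_poly //; do ?apply: agree_sub; apply: agree_trunc.
by rewrite comp_polyB; apply: agree_sub; apply: agree_fcomp.
Qed.

Lemma fcompM (f g h : fps) : h 0%N = 0 ->
  fcomp (fmul f g) h = fmul (fcomp f h) (fcomp g h).
Proof.
move=> h0; apply: (@agree_eq (fun n => (trunc n f * trunc n g) \Po trunc n h)) => n.
  by apply: agree_comp; rewrite ?coef_poly //; do ?apply: agree_mul; apply: agree_trunc.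
by rewrite comp_polyM; apply: agree_mul; apply: agree_fcomp.
Qed.

Lemma fcomp_cst c (h : fps) : h 0%N = 0 -> fcomp (fcst c) h = fcst c.
Proof.
move=> h0; apply: (@agree_eq (fun n => c%:P \Po trunc n h)) => n.
  by apply: agree_comp; rewrite ?coef_poly //; [apply: agree_cst | apply: agree_trunc].
by rewrite comp_polyC; apply: agree_cst.
Qed.

Lemma fcomp_fX (h : fps) : h 0%N = 0 -> fcomp fx h = h.
Proof.
move=> h0; apply: (@agree_eq (fun n => 'X \Po trunc n h)) => n.
  by apply: agree_comp; rewrite ?coef_poly //; [apply: agree_X | apply: agree_trunc].
by rewrite comp_polyX; apply: agree_trunc.
Qed.

Lemma fcompA (f g h : fps) : g 0%N = 0 -> h 0%N = 0 ->
  fcomp (fcomp f g) h = fcomp f (fcomp g h).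
Proof.
move=> g0 h0.
apply: (@agree_eq (fun n => (trunc n f \Po trunc n g) \Po trunc n h)) => n.
  by apply: agree_comp; rewrite ?coef_poly //; [apply: agree_fcomp | apply: agree_trunc].
rewrite -comp_polyA; apply: agree_comp.
- by rewrite (@agree_fcomp n g h h0 0%N) // fcomp_coef0.
- exact: agree_trunc.
- exact: agree_fcomp.
Qed.

(** * Inverses and square roots *)

Lemma size_inv_seq (f : fps) n : size (inv_seq f n) = n.+1.
Proof. by elim: n => [|n IHn] //=; rewrite size_rcons IHn. Qed.

Lemma nth_inv_seq (f : fps) n i : (i <= n)%N -> nth 0 (inv_seq f n) i = finv f i.
Proof.
elim: n => [|n IHn]; first by rewrite leqn0 => /eqP ->.
rewrite leq_eqVlt => /orP[/eqP -> // | ltin].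
by rewrite /= nth_rcons size_inv_seq ltin IHn.
Qed.

Lemma finvS (f : fps) n :
  finv f n.+1 = - (f 0%N)^-1 * \sum_(i < n.+1) f (n.+1 - i)%N * finv f i.
Proof.
rewrite {1}/finv /= nth_rcons size_inv_seq ltnn eqxx; congr (_ * _).
by apply: eq_bigr => i _; rewrite nth_inv_seq // -ltnS.
Qed.

Lemma fmul_finv (f : fps) : f 0%N != 0 -> fmul f (finv f) = fcst 1.
Proof.
move=> f0; rewrite fmulC; apply: fps_ext => -[|n]; first by rewrite fmul_coef0 mulVf.
rewrite /fmul big_ord_recr /= subnn finvS /fcst /= mulrAC mulNr mulVf // mulN1r.
by apply/eqP; rewrite subr_eq0; apply/eqP/eq_bigr => i _; rewrite mulrC.
Qed.

Lemma fmulI (q f g : fps) : q 0%N != 0 -> fmul q f = fmul q g -> f = g.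
Proof.
move=> q0 qfg; have qK h : fmul (finv q) (fmul q h) = h.
  by rewrite fmulA (fmulC _ q) fmul_finv ?fmul1.
by rewrite -(qK f) qfg qK.
Qed.

Lemma size_sqrt_seq (f : fps) n : size (sqrt_seq f n) = n.+1.
Proof. by elim: n => [|n IHn] //=; rewrite size_rcons IHn. Qed.

Lemma nth_sqrt_seq (f : fps) n i : (i <= n)%N -> nth 0 (sqrt_seq f n) i = fsqrt f i.
Proof.
elim: n => [|n IHn]; first by rewrite leqn0 => /eqP ->.
rewrite leq_eqVlt => /orP[/eqP -> // | ltin].
by rewrite /= nth_rcons size_sqrt_seq ltin IHn.
Qed.

Lemma fsqrtS (f : fps) n :
  fsqrt f n.+1 = (f n.+1 - \sum_(1 <= k < n.+1) fsqrt f k * fsqrt f (n.+1 - k)%N)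
                  / (2 * Num.sqrt (f 0%N)).
Proof.
rewrite {1}/fsqrt /= nth_rcons size_sqrt_seq ltnn eqxx; congr ((_ - _) / _).
apply: eq_big_nat => k /andP[k_gt0 ltkn].
by rewrite !nth_sqrt_seq // leq_subLR addnC -addn1 leq_add2l.
Qed.

Lemma fmul_fsqrt (f : fps) : 0 < f 0%N -> fmul (fsqrt f) (fsqrt f) = f.
Proof.
move=> f0; have s0 : Num.sqrt (f 0%N) != 0 by rewrite gt_eqF ?sqrtr_gt0.
apply: fps_ext => -[|n]; first by rewrite fmul_coef0 /fsqrt /= -expr2 sqr_sqrtr ?ltW.
rewrite /fmul big_ord_recl big_ord_recr /= subnn subn0 fsqrtS big_add1 /= big_mkord.
set S := \sum_(i < n) _; set s := Num.sqrt _; set a := (_ - S) / _.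
rewrite (_ : fsqrt f 0%N = s) // addrCA [a * s]mulrC -mulr2n -mulr_natl mulrA.
by rewrite /a mulrC divfK ?mulf_neq0 ?pnatr_eq0 // addrC subrK.
Qed.

Lemma fsqrt_quadratic (a b T : fps) :
  T = fsub (fmul a a) (fscale 4 b) -> 0 < T 0%N ->
  let y := fscale (1/2) (fsub a (fsqrt T)) in fmul y y = fsub (fmul a y) b.
Proof.
move=> defT T0 y.
have defS : fsqrt T = fsub a (fmul (fcst 2) y) by rewrite /y fmul_half2; ring.
have four0 : fcst 4 0%N != 0 :> R by rewrite /fcst /= pnatr_eq0.
apply: (fmulI four0); apply: fsub0_eq.
transitivity (fsub (fmul (fsqrt T) (fsqrt T)) T).
  by rewrite defS defT fscaleE !fcst_nat /=; ring.
by rewrite fmul_fsqrt //; ring.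
Qed.

Lemma quadratic_root_uniq (a b c y z : fps) :
  fmul a (fmul y y) = fsub (fmul b y) c -> fmul a (fmul z z) = fsub (fmul b z) c ->
  fsub (fmul a (fadd y z)) b 0%N != 0 -> y = z.
Proof.
move=> yy zz q0; apply: (fmulI q0); apply: fsub0_eq.
transitivity (fsub (fsub (fmul a (fmul y y)) (fsub (fmul b y) c))
                   (fsub (fmul a (fmul z z)) (fsub (fmul b z) c))); first by ring.
by rewrite yy zz; ring.
Qed.

Lemma omx_coef0 : omx 0%N = 1.
Proof. by rewrite /one_minus_x /fsub /fcst /fX /= subr0. Qed.

Lemma fcomp_omx (y : fps) : y 0%N = 0 -> fcomp omx y = fsub (fcst 1) y.
Proof. by move=> y0; rewrite fcompB // fcomp_cst // fcomp_fX. Qed.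

Lemma fmul_omx_finv : fmul omx io = fcst 1.
Proof. by rewrite fmul_finv // omx_coef0 oner_neq0. Qed.

Lemma fcomp_finv_omx (y c : fps) : y 0%N = 0 ->
  fmul c (fsub (fcst 1) y) = fcst 1 -> fcomp io y = c.
Proof.
move=> y0 cy; have := congr1 (fun f => fcomp f y) fmul_omx_finv.
rewrite /= fcompM // fcomp_omx // fcomp_cst // => ioy.
transitivity (fmul (fcomp io y) (fmul c (fsub (fcst 1) y))); first by rewrite cy; ring.
transitivity (fmul c (fmul (fsub (fcst 1) y) (fcomp io y))); first by ring.
by rewrite ioy; ring.
Qed.

(** * Riordan arrays under substitution *)

Lemma fcomp_riordan (g f v y : fps) : f 0%N = 0 -> y 0%N = 0 ->
  fcomp (riordan_apply g f v) y = fmul (fcomp g y) (fcomp v (fcomp f y)).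
Proof. by move=> f0 y0; rewrite /riordan_apply fcompM // fcompA. Qed.

Lemma LF_f_coef0 : LF_f R 0%N = 0.
Proof. by rewrite /LF_f /fdiv !fmul_coef0 /fX /= !mul0r. Qed.

Lemma fcomp_LF_f (y : fps) : y 0%N = 0 ->
  fcomp (LF_f R) y = fmul (fmul y y) (fcomp io y).
Proof. by move=> y0; rewrite /LF_f /fdiv !fcompM // fcomp_fX. Qed.

Lemma g_plus_comp (v y : fps) : y 0%N = 0 ->
  fcomp (g_plus v) y
  = fmul (fmul (fsub (fcst 2) y) (fcomp io y)) (fcomp v (fcomp (LF_f R) y)).
Proof.
move=> y0; rewrite /g_plus fcomp_riordan ?LF_f_coef0 //.
by rewrite /LF_g /fdiv fcompM // fcompB // fcomp_cst // fcomp_fX.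
Qed.

Lemma g_minus_comp (v y : fps) : y 0%N = 0 ->
  fcomp (g_minus v) y = fmul (fmul y (fcomp io y)) (fcomp v (fcomp (LF_f R) y)).
Proof.
move=> y0; rewrite /g_minus /FF_f -/(LF_f R) fcomp_riordan ?LF_f_coef0 //.
by rewrite /FF_g /fdiv fcompM // fcomp_fX.
Qed.

Lemma laurent_mulE (A B G Q : fps) :
  fmul B G = fmul fx Q -> laurent_mul A B G = fadd (fmul A G) Q.
Proof. by move=> BG; rewrite /laurent_mul BG divX_fXmul. Qed.

(** * The Catalan and Motzkin series *)

Lemma Cat_quadratic : fmul fx (fmul C C) = fsub C (fcst 1).
Proof.
set T := fsub (fcst 1) (fscale 4 fx).
have T0 : T 0%N = 1 by rewrite /T /fsub /fscale /fcst /fX /= mulr0 subr0.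
have defT : T = fsub (fmul (fcst 1) (fcst 1)) (fscale 4 fx) by rewrite fmul1.
have T_gt0 : 0 < T 0%N by rewrite T0 ltr01.
have /= yy := fsqrt_quadratic defT T_gt0.
set y := fscale _ _ in yy.
have defy : fmul fx C = y.
  apply: fXmul_divX.
  by rewrite /y /fscale /fsub /fsqrt /fcst /fX /= mulr0 subr0 sqrtr1 subrr mulr0.
apply: fXmulI; apply: fsub0_eq.
transitivity (fsub (fmul y y) (fsub (fmul (fcst 1) y) fx)); first by rewrite -defy; ring.
by rewrite yy; ring.
Qed.

Lemma Cat_coef0 : C 0%N = 1.
Proof.
have := congr1 (fun f => f 0%N) Cat_quadratic.
rewrite /= /fsub fmul_coef0 /fX /= mul0r /fcst /=.
by move/esym/eqP; rewrite subr_eq0 => /eqP.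
Qed.

Lemma Motz_quadratic : fmul (fmul fx fx) (fmul M M) = fsub (fmul omx M) (fcst 1).
Proof.
set T := fsub (fmul omx omx) (fscale 4 (fmul fx fx)).
have T0 : T 0%N = 1.
  by rewrite /T /fsub /fscale !fmul_coef0 omx_coef0 /fX /= mulr1 mulr0 mulr0 subr0.
have T_gt0 : 0 < T 0%N by rewrite T0 ltr01.
have /= yy := fsqrt_quadratic (erefl T) T_gt0.
set y := fscale _ _ in yy.
have y0 : y 0%N = 0.
  by rewrite /y /fscale /fsub /fsqrt /= T0 omx_coef0 sqrtr1 subrr mulr0.
set E := divX y; have xE : fmul fx E = y := fXmul_divX y0.
have EE : fmul fx (fmul E E) = fsub (fmul omx E) fx.
  apply: fXmulI; apply: fsub0_eq.
  transitivity (fsub (fmul y y) (fsub (fmul omx y) (fmul fx fx))); first by rewrite -xE; ring.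
  by rewrite yy; ring.
have E0 : E 0%N = 0.
  have := congr1 (fun f => f 0%N) EE; rewrite /= /fsub !fmul_coef0 omx_coef0 /fX /=.
  by rewrite mul0r subr0 mul1r => /esym.
have xM : fmul fx M = E := fXmul_divX E0.
apply: fXmulI; apply: fsub0_eq.
transitivity (fsub (fmul fx (fmul E E)) (fsub (fmul omx E) fx)); first by rewrite -xM; ring.
by rewrite EE; ring.
Qed.

Lemma Motz_shift_Cat : w = fsub C (fcst 1).
Proof.
have t0 : t 0%N = 0 by rewrite /fdiv fmul_coef0 /fX mul0r.
have tomx : fmul t omx = fx by rewrite /fdiv -fmulA (fmulC io) fmul_omx_finv; ring.
have := congr1 (fun f => fcomp f t) Motz_quadratic.
rewrite /= fcompB // !fcompM // fcomp_omx // fcomp_fX // fcomp_cst // => Mt_eq.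
apply: (@quadratic_root_uniq fx (fsub (fcst 1) (fadd fx fx)) fx).
- (* (1 - x) t times the Motzkin equation at t, corrected by multiples of t (1 - x) - x *)
  apply: fsub0_eq; transitivity (fsub
      (fmul (fmul omx t) (fsub (fmul (fmul t t) (fmul (fcomp M t) (fcomp M t)))
                               (fsub (fmul (fsub (fcst 1) t) (fcomp M t)) (fcst 1))))
      (fmul (fsub (fmul t omx) fx) (fadd (fcst 1) (fadd w (fmul w w))))).
    by rewrite /one_minus_x; ring.
  by rewrite Mt_eq tomx; ring.
- by ring [Cat_quadratic].
- by rewrite /fsub /fadd fmul_coef0 /fX /fcst /= mul0r addr0 subr0 sub0r oppr_eq0 oner_neq0.
Qed.

(** * The Catalan substitutions *)

Lemma xC_coef0 : xC 0%N = 0.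
Proof. by rewrite fmul_coef0 /fX mul0r. Qed.

Lemma omC_coef0 : omC 0%N = 0.
Proof. by rewrite /fsub Cat_coef0 subrr. Qed.

Lemma fcomp_finv_omx_xC : fcomp io xC = C.
Proof. by apply: fcomp_finv_omx; [exact: xC_coef0 | ring [Cat_quadratic]]. Qed.

Lemma fcomp_finv_omx_omC : fcomp io omC = fsub (fcst 1) xC.
Proof. by apply: fcomp_finv_omx; [exact: omC_coef0 | ring [Cat_quadratic]]. Qed.

Lemma fcomp_LF_f_xC : fcomp (LF_f R) xC = x2C3.
Proof. by rewrite fcomp_LF_f ?xC_coef0 // fcomp_finv_omx_xC. Qed.

Lemma fcomp_LF_f_omC : fcomp (LF_f R) omC = x2C3.
Proof. by rewrite fcomp_LF_f ?omC_coef0 // fcomp_finv_omx_omC; ring [Cat_quadratic]. Qed.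

Lemma g_plus_minus_xC (v : fps) :
  fcomp (g_plus v) xC = fmul (fmul (fsub (fcst 2) xC) C) (fcomp v x2C3) /\
  fcomp (g_minus v) xC = fmul (fmul xC C) (fcomp v x2C3).
Proof.
by rewrite g_plus_comp ?g_minus_comp ?xC_coef0 // fcomp_LF_f_xC fcomp_finv_omx_xC.
Qed.

Lemma g_plus_minus_omC (v : fps) :
  fcomp (g_plus v) omC
    = fmul (fmul (fsub (fcst 2) omC) (fsub (fcst 1) xC)) (fcomp v x2C3) /\
  fcomp (g_minus v) omC = fmul (fmul omC (fsub (fcst 1) xC)) (fcomp v x2C3).
Proof.
by rewrite g_plus_comp ?g_minus_comp ?omC_coef0 // fcomp_LF_f_omC fcomp_finv_omx_omC.
Qed.

Lemma corollary4p4a (v : fps) :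
  fcomp (g_plus v) xC = laurent_mul C (fcst (-2)) (fcomp (g_minus v) omC).
Proof.
have [-> _] := g_plus_minus_xC v; have [_ ->] := g_plus_minus_omC v; set P := fcomp v _.
rewrite (@laurent_mulE _ _ _ (fmul (fcst 2) (fmul C P))); rewrite ?fcstN !fcst_nat /=;
  ring [Cat_quadratic].
Qed.

Lemma corollary4p4b (v : fps) :
  fcomp (g_plus v) omC
  = laurent_mul (fsub (fadd (fscale 2 (fmul fx (fmul C C))) xC) (fscale 4 C))
                (fsub (fcst 2) fx) (fcomp (g_minus v) xC).
Proof.
have [_ ->] := g_plus_minus_xC v; have [-> _] := g_plus_minus_omC v; set P := fcomp v _.
rewrite (@laurent_mulE _ _ _ (fmul (fsub (fcst 2) fx) (fmul C (fmul C P)))).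
  by rewrite !fscaleE !fcst_nat /=; ring [Cat_quadratic].
by ring.
Qed.

Lemma corollary4p4c (v : fps) :
  fcomp (g_plus v) xC
  = laurent_mul w (fsub fx (fcst 2)) (fcomp (g_minus v) (fopp w)).
Proof.
have -> : fopp w = omC by rewrite Motz_shift_Cat; ring.
have [-> _] := g_plus_minus_xC v; have [_ ->] := g_plus_minus_omC v; set P := fcomp v _.
rewrite Motz_shift_Cat (@laurent_mulE _ _ _ (fmul (fsub (fcst 2) fx) (fmul C P)));
  rewrite !fcst_nat /=; ring [Cat_quadratic].
Qed.

Lemma corollary4p4d (v : fps) :
  fcomp (g_plus v) (fopp w)
  = laurent_mul
      (fadd (fmul (fsub (fscale 3 fx) (fcst 4)) C)
            (fscale 2 (fdiv (fmul (fmul fx fx) (fmul C (fcomp M t))) omx)))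
      (fsub (fcst 2) fx) (fcomp (g_minus v) xC).
Proof.
have -> : fopp w = omC by rewrite Motz_shift_Cat; ring.
have -> : fdiv (fmul (fmul fx fx) (fmul C (fcomp M t))) omx = fmul xC w.
  by rewrite /fdiv; ring.
have [_ ->] := g_plus_minus_xC v; have [-> _] := g_plus_minus_omC v; set P := fcomp v _.
rewrite Motz_shift_Cat (@laurent_mulE _ _ _ (fmul (fsub (fcst 2) fx) (fmul C (fmul C P)))).
  by rewrite !fscaleE !fcst_nat /=; ring [Cat_quadratic].
by ring.
Qed.

End FormalPowerSeries.

Theorem corollary4p4 (R : realType) (v : fps R) :
  let x := fX R in
  let C := Cat R in
  let xC := fmul x C in
  let one_minus_C := fsub (fcst 1) C in
  (* x/(1-x) * M(x/(1-x)) *)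
  let w := fmul (fdiv x (one_minus_x R)) (fcomp (Motz R) (fdiv x (one_minus_x R))) in
  let two_minus_x := fsub (fcst 2) x in
  [/\ (* (a) *)
      fcomp (g_plus v) xC
      = laurent_mul C (fcst (-2)) (fcomp (g_minus v) one_minus_C),
      (* (b) *)
      fcomp (g_plus v) one_minus_C
      = laurent_mul (fsub (fadd (fscale 2 (fmul x (fmul C C))) xC) (fscale 4 C))
                    two_minus_x (fcomp (g_minus v) xC),
      (* (c) *)
      fcomp (g_plus v) xC
      = laurent_mul w (fsub x (fcst 2)) (fcomp (g_minus v) (fopp w))
    & (* (d) *)
      fcomp (g_plus v) (fopp w)
      = laurent_mul
          (fadd (fmul (fsub (fscale 3 x) (fcst 4)) C)
                (fscale 2 (fdiv (fmul (fmul x x) (fmul C (fcomp (Motz R) (fdiv x (one_minus_x R)))))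
                                (one_minus_x R))))
          two_minus_x (fcomp (g_minus v) xC)].
Proof.
split; [exact: corollary4p4a | exact: corollary4p4b | exact: corollary4p4c | exact: corollary4p4d].
Qed.
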